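(* Let $\lambda,\mu$ be partitions with at most $m$ parts, each at most $m$, such that $\mu\subset\lambda^c$ and the skew partition $\lambda^c/\mu$ is symmetric about the main diagonal. If $\lambda^c/\mu$ has an odd number of boxes strictly above its main diagonal, then its sign-imbalance is zero.
   Context: Partitions are identified with Young diagrams (sets of boxes $(i,j)$, row $i$, column $j$, with $\lambda_i$ boxes in row $i$). The complement is $\lambda^c_i=m-\lambda_{m+1-i}$ for $i=1,\dots,m$; $\mu\subset\lambda^c$ means $\mu_i\le\lambda^c_i$ for all $i$, and $\lambda^c/\mu$ is the set of boxes of $\lambda^c$ not in $\mu$. It is symmetric if invariant under $(i,j)\mapsto(j,i)$; a box is above the main diagonal if $j>i$. Partially order the boxes by letting each box be covered by its neighbors immediately to the right and immediately below; a linear extension (standard Young tableau) of shape $\lambda^c/\mu$ with $N$ boxes is a bijection from the boxes to $\{1,\dots,N\}$ increasing along this order. Fixing one linear extension $T_0$, each linear extension $T$ gives a permutation $T\circ T_0^{-1}$ of $\{1,\dots,N\}$; the sign-imbalance is the absolute value of the sum of the signs of these permutations over all linear extensions $T$. *)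

From mathcomp Require Import all_boot all_order all_fingroup all_algebra.
Set Implicit Arguments. Unset Strict Implicit. Unset Printing Implicit Defensive.
Import GRing.Theory Num.Theory.

(* Rows and columns are 0-indexed: row i of the paper is (i-1 : 'I_m).
   A partition with at most m parts, each at most m, is lam : 'I_m -> nat,
   weakly decreasing with values <= m. *)
Definition is_partition (m : nat) (lam : 'I_m -> nat) : Prop :=
  (forall i j : 'I_m, (i <= j)%N -> (lam j <= lam i)%N) /\
  (forall i : 'I_m, (lam i <= m)%N).

(* complement: lam^c_i = m - lam_{m+1-i} (1-indexed); 0-indexed rev_ord *)
Definition part_compl (m : nat) (lam : 'I_m -> nat) (i : 'I_m) : nat :=
  m - lam (rev_ord i).

Definition subpart (m : nat) (mu nu : 'I_m -> nat) : Prop :=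
  forall i : 'I_m, (mu i <= nu i)%N.

Definition skew_shape (m : nat) (nu mu : 'I_m -> nat) : {set 'I_m * 'I_m} :=
  [set b : 'I_m * 'I_m | (mu b.1 <= b.2)%N && (b.2 < nu b.1)%N].

Definition symmetric_shape (m : nat) (S : {set 'I_m * 'I_m}) : Prop :=
  forall i j : 'I_m, ((i, j) \in S) = ((j, i) \in S).

Definition above_diag (m : nat) (S : {set 'I_m * 'I_m}) : {set 'I_m * 'I_m} :=
  [set b in S | (b.1 < b.2)%N].

Definition covers (m : nat) (b b' : 'I_m * 'I_m) : bool :=
  ((b'.1 == b.1) && (b'.2 == b.2.+1 :> nat)) ||
  ((b'.2 == b.2) && (b'.1 == b.1.+1 :> nat)).

(* A linear extension T of S, a bijection S -> {1..N}, is encoded by the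
   permutation s of 'I_N (N = #|S|) with T (enum_val k) = s k + 1, where
   enum_val enumerates S. *)
Definition lin_ext (m : nat) (S : {set 'I_m * 'I_m}) (s : 'S_#|S|) : bool :=
  [forall k : 'I_#|S|, forall l : 'I_#|S|,
     covers (enum_val k) (enum_val l) ==> (s k < s l)%N].

(* sign-imbalance computed with respect to the fixed linear extension s0:
   | sum over linear extensions s of sign(s * s0^-1) |
   (s * s0^-1 corresponds to T o T0^-1). *)
Definition sign_imbalance (m : nat) (S : {set 'I_m * 'I_m}) (s0 : 'S_#|S|) : int :=
  `| \sum_(s : 'S_#|S| | lin_ext s) (-1) ^+ (odd_perm (s0^-1 * s)%g) |%R.

From mathcomp Require Import all_boot all_order all_fingroup all_algebra.
From mathcomp Require Import zify.
Set Implicit Arguments. Unset Strict Implicit. Unset Printing Implicit Defensive.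
Import GRing.Theory Num.Theory.

(* Transposing boxes maps the symmetric shape to itself and preserves the
   cover relation, so composing a linear extension with the permutation t of
   the box indices induced by transposition gives again a linear extension.
   The involution t is a product of one transposition per pair of boxes
   mirrored across the diagonal, i.e. of #|above_diag S| transpositions; this
   number is odd, so s |-> t * s is a sign-reversing involution on the linear
   extensions and the signed sum vanishes. *)

Lemma odd_perm_involution (T : finType) (t : {perm T}) (A : {set T}) :
  involutive t ->
  (forall x, x \in A -> t x \notin A) ->
  (forall x, t x != x -> (x \in A) || (t x \in A)) ->
  odd_perm t = odd #|A|.
Proof.
move eA: #|A| => n; elim: n t A eA => [|n IHn] t A eA tK tA_out tA_cover.
  have A0 : A = set0 by apply/eqP; rewrite -cards_eq0 eA.
  suff -> : t = 1%g by rewrite odd_perm1.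
  apply/permP => x; rewrite perm1; apply/eqP/negPn/negP => /tA_cover.
  by rewrite A0 !inE.
have [a Aa] : {a | a \in A} by apply/sigW/set0Pn; rewrite -card_gt0 eA.
have tAa : t a \notin A := tA_out a Aa.
have ta_neq_a : t a != a by apply: contraNneq tAa => ->.
set t' := (tperm a (t a) * t)%g.
have t'E x : t' x = if (x == a) || (x == t a) then x else t x.
  rewrite permM; case: tpermP => [->|->|/eqP/negbTE-> /eqP/negbTE->] //.
  - by rewrite eqxx tK.
  - by rewrite eqxx orbT.
have t_inj := can_inj tK.
suff : odd_perm t' = odd n.
  by rewrite odd_permM odd_tperm eq_sym ta_neq_a /= => <-; rewrite negbK.
apply: (IHn t' (A :\ a)).
- by move: eA; rewrite (cardsD1 a) Aa => -[].
- move=> x; rewrite [t' x]t'E; case: ifPn => [|fix_x]; first by rewrite t'E => ->.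
  rewrite t'E tK; case: ifP => // /orP[/eqP xa|/eqP/t_inj xa].
    by rewrite -xa tK eqxx orbT in fix_x.
  by rewrite xa eqxx in fix_x.
- move=> x /setD1P[x_neq_a Ax]; rewrite t'E (negbTE x_neq_a) /=.
  have -> : (x == t a) = false by apply: contraNF tAa => /eqP <-.
  by rewrite !inE negb_and tA_out ?orbT.
- move=> x; rewrite t'E; case: ifPn => [|]; first by rewrite eqxx.
  rewrite negb_or => /andP[x_neq_a x_neq_ta] /tA_cover.
  have tx_neq_a : t x != a by apply: contraNneq x_neq_ta => <-; rewrite tK.
  by rewrite !inE x_neq_a tx_neq_a.
Qed.

Lemma signed_sum_perm_eq0 (n : nat) (P : pred 'S_n) (s0 t : 'S_n) :
  odd_perm t -> (forall s, P (t * s)%g = P s) ->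
  (\sum_(s | P s) (-1) ^+ odd_perm (s0^-1 * s)%g = 0 :> int)%R.
Proof.
move=> odd_t Pt.
set X := (\sum_(s | P s) _)%R.
suff X_opp : X = (- X)%R by lia.
rewrite {1}/X (reindex_inj (mulgI t)) /= -sumrN.
apply: eq_big => [s|s _]; first exact: Pt.
by rewrite mulgA !odd_permM odd_t addbT addNb signrN.
Qed.

Definition transpose_box (m : nat) (b : 'I_m * 'I_m) := (b.2, b.1).

Lemma transpose_boxK (m : nat) : involutive (@transpose_box m).
Proof. by case. Qed.

Lemma covers_transpose (m : nat) (b b' : 'I_m * 'I_m) :
  covers (transpose_box b) (transpose_box b') = covers b b'.
Proof. by case: b b' => [i j] [i' j']; rewrite /covers /= orbC. Qed.

Section TransposeLinearExtensions.

Variables (m : nat) (S : {set 'I_m * 'I_m}).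
Hypothesis S_sym : symmetric_shape S.
Variables (b0 : 'I_m * 'I_m) (Sb0 : b0 \in S).

Lemma transpose_box_in b : b \in S -> transpose_box b \in S.
Proof. by case: b => i j; rewrite S_sym. Qed.

Definition transpose_idx (k : 'I_#|S|) : 'I_#|S| :=
  enum_rank_in Sb0 (transpose_box (enum_val k)).

Lemma enum_val_transpose k :
  enum_val (transpose_idx k) = transpose_box (enum_val k).
Proof. by rewrite enum_rankK_in // transpose_box_in // enum_valP. Qed.

Lemma transpose_idxK : involutive transpose_idx.
Proof.
by move=> k; apply: enum_val_inj; rewrite !enum_val_transpose transpose_boxK.
Qed.

Definition transpose_perm : 'S_#|S| := perm (can_inj transpose_idxK).

Lemma transpose_permE k : transpose_perm k = transpose_idx k.
Proof. exact: permE. Qed.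

Lemma transpose_permK : involutive transpose_perm.
Proof. by move=> k; rewrite !transpose_permE transpose_idxK. Qed.

Lemma lin_ext_transpose_mul s : lin_ext (transpose_perm * s)%g -> lin_ext s.
Proof.
move=> /forallP ext_ts; apply/forallP => k; apply/forallP => l; apply/implyP.
move: (ext_ts (transpose_idx k)) => /forallP/(_ (transpose_idx l))/implyP.
by rewrite !permM !transpose_permE !transpose_idxK !enum_val_transpose
  covers_transpose.
Qed.

Lemma lin_ext_transpose s : lin_ext (transpose_perm * s)%g = lin_ext s.
Proof.
apply/idP/idP => [|ext_s]; first exact: lin_ext_transpose_mul.
have tt : (transpose_perm * transpose_perm = 1)%g.
  by apply/permP => k; rewrite permM transpose_permK perm1.
by apply: lin_ext_transpose_mul; rewrite mulgA tt mul1g.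
Qed.

Lemma card_above_diag_idx :
  #|[set k : 'I_#|S| | (enum_val k).1 < (enum_val k).2]| = #|above_diag S|.
Proof.
rewrite -(card_imset _ enum_val_inj); apply: eq_card => b.
rewrite /above_diag !inE; apply/imsetP/andP => [[k]|[Sb lt_b]].
  by rewrite inE => lt_k ->; rewrite enum_valP.
by exists (enum_rank_in Sb0 b); rewrite ?inE enum_rankK_in.
Qed.

Lemma odd_transpose_perm : odd_perm transpose_perm = odd #|above_diag S|.
Proof.
rewrite -card_above_diag_idx; apply: odd_perm_involution transpose_permK _ _.
  move=> k; rewrite !inE transpose_permE enum_val_transpose /=.
  by move/ltnW; rewrite leqNgt.
move=> k; rewrite transpose_permE !inE enum_val_transpose /= => moved.
have : enum_val k != transpose_box (enum_val k).
  by apply: contraNneq moved => /esym; rewrite -enum_val_transpose => /enum_val_inj->.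
case: (enum_val k) => i j /= ij_neq.
have : (i : nat) != j by apply: contraNneq ij_neq => /val_inj->.
by case: ltngtP.
Qed.

End TransposeLinearExtensions.

Lemma sign_imbalance_symmetric_eq0 (m : nat) (S : {set 'I_m * 'I_m}) :
  symmetric_shape S -> odd #|above_diag S| ->
  forall s0 : 'S_#|S|, sign_imbalance s0 = 0%R.
Proof.
move=> S_sym odd_above s0.
have [b0 Sb0] : {b0 | b0 \in S}.
  apply/sigW; have : (0 < #|above_diag S|)%N by case: #|_| odd_above.
  by rewrite card_gt0 => /set0Pn[b]; rewrite inE => /andP[Sb _]; exists b.
rewrite /sign_imbalance (@signed_sum_perm_eq0 _ _ _ (transpose_perm S_sym Sb0))
  ?normr0 // => [|s]; first by rewrite odd_transpose_perm.
exact: lin_ext_transpose.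
Qed.

Theorem lemma4p9 (m : nat) (lam mu : 'I_m -> nat) :
  is_partition lam -> is_partition mu ->
  subpart mu (part_compl lam) ->
  symmetric_shape (skew_shape (part_compl lam) mu) ->
  ssrnat.odd #|above_diag (skew_shape (part_compl lam) mu)| ->
  forall s0 : 'S_#|skew_shape (part_compl lam) mu|,
    lin_ext s0 -> sign_imbalance s0 = 0%R.
Proof.
move=> _ _ _ S_sym odd_above s0 _.
exact: sign_imbalance_symmetric_eq0.
Qed.
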